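(* Let $R$ be a nonzero commutative ring and let $\mathrm{Rd}(R)$ be endowed with the hull-kernel topology. If $\mathrm{Spec}(R)$ is infinite then $\dim(\mathrm{Rd}(R))=\infty$; if $\mathrm{Spec}(R)$ is finite then $\dim(\mathrm{Rd}(R))=|\mathrm{Spec}(R)|-1$. In all cases $\dim(\mathrm{Rd}(R))\ge\dim(\mathrm{Spec}(R))$. Moreover, if $\mathrm{Spec}(R)$ is linearly ordered by inclusion, then $\dim(\mathrm{Rd}(R))=\dim(\mathrm{Spec}(R))$.
   Context: $\mathrm{Rd}(R)$ is the set of proper radical ideals of $R$; its hull-kernel topology has as subbasis of closed sets the sets $\{H\in\mathrm{Rd}(R)\mid x_1,\dots,x_n\in H\}$ for $x_1,\dots,x_n\in R$. The dimension $\dim$ of a topological space is the supremum of lengths $t$ of chains $Z_0\subsetneq Z_1\subsetneq\dots\subsetneq Z_t$ of irreducible closed subsets; $|\cdot|$ denotes cardinality. *)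

From HB Require Import structures.
From mathcomp Require Import all_boot all_order all_algebra.
From Stdlib Require Import Classical ClassicalEpsilon.
Set Implicit Arguments. Unset Strict Implicit. Unset Printing Implicit Defensive.
Import GRing.Theory.
Local Open Scope ring_scope.

Section Ideals.
Variable R : comNzRingType.

Definition is_ideal (I : R -> Prop) : Prop :=
  I 0 /\ (forall x y, I x -> I y -> I (x + y)) /\ (forall r x, I x -> I (r * x)).

Definition is_proper (I : R -> Prop) : Prop := ~ I 1.

Definition is_radical (I : R -> Prop) : Prop := forall (x : R) (n : nat), I (x ^+ n) -> I x.

Definition is_prime_ideal (I : R -> Prop) : Prop :=
  is_ideal I /\ is_proper I /\ (forall x y, I (x * y) -> I x \/ I y).

Definition Rd : Type := {I : R -> Prop | is_ideal I /\ is_proper I /\ is_radical I}.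
Definition Spec : Type := {P : R -> Prop | is_prime_ideal P}.
End Ideals.

Section Topology.
Variable T : Type.

(* closed sets of the topology generated by a subbasis S of closed sets:
   the smallest family containing S and closed under finite unions and
   arbitrary intersections (empty union = empty set, empty intersection = T) *)
Inductive gen_closed (S : (T -> Prop) -> Prop) : (T -> Prop) -> Prop :=
| gc_sub A : S A -> gen_closed S A
| gc_empty : gen_closed S (fun _ => False)
| gc_union A B : gen_closed S A -> gen_closed S B -> gen_closed S (fun x => A x \/ B x)
| gc_inter (F : (T -> Prop) -> Prop) :
    (forall A, F A -> gen_closed S A) -> gen_closed S (fun x => forall A, F A -> A x).

Definition pred_sub (A B : T -> Prop) : Prop := forall x, A x -> B x.
Definition pred_ssub (A B : T -> Prop) : Prop := pred_sub A B /\ ~ pred_sub B A.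

Variable closed : (T -> Prop) -> Prop.

Definition irreducible_closed (Z : T -> Prop) : Prop :=
  closed Z /\ (exists x, Z x) /\
  (forall A B, closed A -> closed B -> pred_sub Z (fun x => A x \/ B x) ->
     pred_sub Z A \/ pred_sub Z B).

Definition has_chain (t : nat) : Prop :=
  exists Z : nat -> T -> Prop,
    (forall i, (i <= t)%N -> irreducible_closed (Z i)) /\
    (forall i, (i < t)%N -> pred_ssub (Z i) (Z i.+1)).

Inductive enat := EFin of nat | EInf.

Definition enat_le (a b : enat) : Prop :=
  match a, b with
  | EFin m, EFin n => (m <= n)%N
  | _, EInf => True
  | EInf, EFin _ => False
  end.

Definition is_sup_len (n : nat) : Prop :=
  (forall t, has_chain t -> (t <= n)%N) /\
  (forall m, (forall t, has_chain t -> (t <= m)%N) -> (n <= m)%N).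

(* dimension = supremum in N ∪ {∞} of the lengths of chains of irreducible closed sets *)
Definition top_dim : enat :=
  match excluded_middle_informative (exists n, is_sup_len n) with
  | left H => EFin (proj1_sig (constructive_indefinite_description _ H))
  | right _ => EInf
  end.
End Topology.

Section Topologies.
Variable R : comNzRingType.

(* hull-kernel topology on Rd(R): subbasis of closed sets
   {H | x_1, ..., x_n ∈ H} for finite lists x_1..x_n of elements of R *)
Definition hk_subbasis (A : Rd R -> Prop) : Prop :=
  exists s : seq R, forall H : Rd R, A H <-> (forall x, x \in s -> proj1_sig H x).

Definition hk_closed (A : Rd R -> Prop) : Prop :=
  exists B, gen_closed hk_subbasis B /\ forall H, A H <-> B H.

Definition zariski_closed (A : Spec R -> Prop) : Prop :=
  exists E : R -> Prop, forall P : Spec R, A P <-> (forall x, E x -> proj1_sig P x).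
End Topologies.

Definition has_card (T : Type) (n : nat) : Prop :=
  exists f : 'I_n -> T, bijective f.

(* In both spaces the irreducible closed sets are exactly the hulls of points,
   so a chain of irreducible closed sets of length t is a strictly descending
   chain of t+1 proper radical (resp. prime) ideals.  A proper radical ideal is
   the intersection of the primes containing it (Krull), so a chain of radical
   ideals of length t yields t+1 distinct primes.  Conversely, intersecting
   m+1 distinct primes one at a time, each newly added prime minimal among the
   remaining ones, gives a chain of length m; each step is strict because a
   prime containing a finite intersection of ideals contains one of them.
   Hence dim Rd(R) = |Spec R| - 1.  Primes are radical, and when Spec R is
   totally ordered every proper radical ideal is prime. *)

From mathcomp Require Import all_boot all_order all_algebra ring.
From mathcomp Require Import boolp.
From mathcomp Require classical_sets.
From Stdlib Require Import ClassicalEpsilon.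
Set Implicit Arguments. Unset Strict Implicit. Unset Printing Implicit Defensive.
Import GRing.Theory.

Lemma pred_ext T (A B : T -> Prop) : pred_sub A B -> pred_sub B A -> A = B.
Proof. by move=> AB BA; apply: funext => x; apply: propext; split; [apply: AB|apply: BA]. Qed.

Definition is_chain T (C : (T -> Prop) -> Prop) : Prop :=
  forall A B, C A -> C B -> pred_sub A B \/ pred_sub B A.

Lemma zorn_pred T (F : (T -> Prop) -> Prop) (A0 : T -> Prop) : F A0 ->
  (forall C, (forall A, C A -> F A) -> (exists A, C A) -> is_chain C ->
     F (fun t => exists2 A, C A & A t)) ->
  exists M, F M /\ forall J, F J -> pred_sub M J -> pred_sub J M.
Proof.
move=> FA0 F_union.
pose le (A B : {A | F A}) := `[< pred_sub (sval A) (sval B) >].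
have [[M FM] Mmax] : exists M, classical_sets.premaximal le M.
  apply: (classical_sets.ZL_preorder (exist _ A0 FA0)).
  - by move=> A; apply/asboolP.
  - by move=> A B C /asboolP AB /asboolP BC; apply/asboolP => x /AB /BC.
  move=> S S_tot; have [[A SA]|S0] := pselect (exists A, S A); last first.
    by exists (exist _ A0 FA0) => A SA; case: S0; exists A.
  pose C B := exists2 A, S A & sval A = B.
  have FU : F (fun t => exists2 B, C B & B t).
    apply: F_union; last 2 first.
    - by exists (sval A), A.
    - move=> _ _ [B SB <-] [B' SB' <-].
      by case: (S_tot B B' SB SB') => /asboolP; [left|right].
    by move=> _ [B _ <-]; exact: svalP.
  exists (exist _ _ FU) => B SB; apply/asboolP => t Bt.
  by exists (sval B) => //; exists B.
exists M; split=> // J FJ MJ.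
by apply/asboolP; apply: (Mmax (exist _ J FJ)); apply/asboolP.
Qed.

Lemma exists_minimal (I : finType) T (f : I -> T -> Prop) (S : {set I}) i0 : i0 \in S ->
  exists2 M, M \in S & forall j, j \in S -> pred_sub (f j) (f M) -> pred_sub (f M) (f j).
Proof.
move=> i0S; pose below i := [set l in S | `[< pred_sub (f l) (f i) >]].
have [M MS Mmin] := arg_minnP (fun i => #|below i|) i0S.
exists M => // j jS jM; apply: contrapT => Mj.
suff : #|below j| < #|below M| by rewrite ltnNge Mmin.
apply: proper_card; apply/properP; split.
  apply/subsetP => l; rewrite !inE => /andP [-> /asboolP lj].
  by apply/asboolP => x /lj /jM.
by exists M; rewrite !inE (MS : M \in S) /=; apply/asboolP.
Qed.

Definition descending_chain A (X : (A -> Prop) -> Prop) (t : nat) : Prop :=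
  exists H : nat -> A -> Prop,
    (forall i, (i <= t)%N -> X (H i)) /\ (forall i, (i < t)%N -> pred_ssub (H i.+1) (H i)).

Lemma descending_chain_mono A (X Y : (A -> Prop) -> Prop) t :
  (forall K, X K -> Y K) -> descending_chain X t -> descending_chain Y t.
Proof. by move=> XY [H [XH Hss]]; exists H; split=> // i /XH /XY. Qed.

Lemma injections_of_infinite T (t0 : T) : (forall n, ~ has_card T n) ->
  forall m, exists f : 'I_m -> T, injective f.
Proof.
move=> inf; elim=> [|m [f injf]]; first by exists (fun _ => t0) => -[].
have [onto|] := pselect (forall x, exists i, f i = x).
  have /choice [g fg] := onto; case: (inf m); exists f, g => // i.
  by apply: injf; rewrite fg.
move=> /existsNP [x notim].
exists (fun i => if unlift ord_max i is Some j then f j else x) => i j.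
case: unliftP => [i' ->|->]; case: unliftP => [j' ->|->] //.
- by move=> /injf ->.
- by move=> e; case: notim; exists i'.
- by move=> e; case: notim; exists j'.
Qed.

Section HullKernel.
Variables (T A : Type) (carrier : T -> A -> Prop).

Definition hull (K : A -> Prop) : T -> Prop := fun t => pred_sub K (carrier t).
Definition kernel (Z : T -> Prop) : A -> Prop := fun a => forall t, Z t -> carrier t a.

Variables (closed : (T -> Prop) -> Prop) (X : (A -> Prop) -> Prop).
Hypothesis carrier_onto : forall K, X K -> exists t, carrier t = K.
Hypothesis closed_up :
  forall Z s t, closed Z -> Z s -> pred_sub (carrier s) (carrier t) -> Z t.
Hypothesis closed_hull : forall K, X K -> closed (hull K).
Hypothesis irreducible_hull : forall Z, irreducible_closed closed Z ->
  exists K, X K /\ forall t, Z t <-> hull K t.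

Lemma sub_hull K L : X K -> pred_sub (hull K) (hull L) <-> pred_sub L K.
Proof.
move=> /carrier_onto [s sK]; split=> [KL|LK t Kt r /LK /Kt //].
by have := KL s; rewrite /hull sK; apply.
Qed.

Lemma hull_irreducible K : X K -> irreducible_closed closed (hull K).
Proof.
move=> XK; have [s sK] := carrier_onto XK.
have Ks : hull K s by rewrite /hull sK.
split; [exact: closed_hull | split; first by exists s].
move=> B C cB cC KBC; case: (KBC s Ks) => [Bs|Cs]; [left|right] => t Kt.
- by apply: closed_up cB Bs _; rewrite sK.
- by apply: closed_up cC Cs _; rewrite sK.
Qed.

Lemma has_chain_hullE t : has_chain closed t <-> descending_chain X t.
Proof.
split=> [[Z [Zirr Zss]]|[H [XH Hss]]].
  have /choice [H HZ] : forall i, exists K, (i <= t)%N ->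
      X K /\ forall s, Z i s <-> hull K s.
    move=> i; have [it|_] := boolP (i <= t)%N; last by exists (fun _ => True).
    by have [K ?] := irreducible_hull (Zirr i it); exists K.
  exists H; split=> [i /HZ [] //|i it].
  have [[XHi Zi] [XHi1 Zi1]] := (HZ i (ltnW it), HZ i.+1 it).
  have [ZZ1 Z1Z] := Zss i it.
  split=> [|/(sub_hull (H i) XHi1).2 sub].
    by apply/(sub_hull (H i.+1) XHi) => s /Zi /ZZ1 /Zi1.
  by apply: Z1Z => s /Zi1 /sub /Zi.
exists (fun i => hull (H i)); split=> [i it|i it]; first exact: hull_irreducible (XH i it).
have [XHi XHi1] := (XH i (ltnW it), XH i.+1 it); have [HH1 H1H] := Hss i it.
by split=> [|/(sub_hull (H i) XHi1)]; [apply/(sub_hull (H i.+1) XHi) |].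
Qed.

End HullKernel.

Section Dimension.
Variables (T : Type) (closed : (T -> Prop) -> Prop).

Lemma top_dim_fin n : is_sup_len closed n -> top_dim closed = EFin n.
Proof.
move=> supn; rewrite /top_dim; case: excluded_middle_informative => [e|]; last first.
  by case; exists n.
case: (constructive_indefinite_description _ e) => m /= [ubm lubm].
by apply/congr1/eqP; rewrite eqn_leq (lubm _ supn.1) (supn.2 _ ubm).
Qed.

Lemma top_dim_inf : ~ (exists n, is_sup_len closed n) -> top_dim closed = EInf.
Proof. by rewrite /top_dim; case: excluded_middle_informative. Qed.

Lemma top_dim_unbounded : (forall n, has_chain closed n) -> top_dim closed = EInf.
Proof.
move=> chains; apply: top_dim_inf => -[n [ubn _]].
by have := ubn _ (chains n.+1); rewrite ltnn.
Qed.

Lemma is_sup_len_exists b : (forall t, has_chain closed t -> (t <= b)%N) ->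
  exists n, is_sup_len closed n.
Proof.
elim/ltn_ind: b => b IH ubb.
have [[m [ubm mb]]|nosmaller] :=
  pselect (exists m, (forall t, has_chain closed t -> (t <= m)%N) /\ (m < b)%N).
  exact: IH mb ubm.
exists b; split=> // m ubm; rewrite leqNgt; apply/negP => mb.
by apply: nosmaller; exists m.
Qed.
End Dimension.

Lemma top_dim_le T1 T2 (c1 : (T1 -> Prop) -> Prop) (c2 : (T2 -> Prop) -> Prop) :
  (forall t, has_chain c1 t -> has_chain c2 t) -> enat_le (top_dim c1) (top_dim c2).
Proof.
move=> c12; have [[n [ub2 lub2]]|unbounded] := pselect (exists n, is_sup_len c2 n).
  have [m [ub1 lub1]] := is_sup_len_exists (fun t h => ub2 t (c12 t h)).
  rewrite (top_dim_fin (conj ub2 lub2)) (top_dim_fin (conj ub1 lub1)) /=.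
  by apply: lub1 => t /c12 /ub2.
by rewrite (top_dim_inf unbounded); case: (top_dim c1).
Qed.

Lemma top_dim_eq T1 T2 (c1 : (T1 -> Prop) -> Prop) (c2 : (T2 -> Prop) -> Prop) :
  (forall t, has_chain c1 t <-> has_chain c2 t) -> top_dim c1 = top_dim c2.
Proof.
move=> c12; have := top_dim_le (fun t => (c12 t).1); have := top_dim_le (fun t => (c12 t).2).
case: (top_dim c1) => [a|]; case: (top_dim c2) => [b|] //= ba ab.
by apply/congr1/eqP; rewrite eqn_leq ab ba.
Qed.

Section PrimeIdeals.
Variable R : comNzRingType.
Local Open Scope ring_scope.
Implicit Types (J M P : R -> Prop) (x : R).

Definition is_proper_radical (I : R -> Prop) := is_ideal I /\ is_proper I /\ is_radical I.

Lemma chain_union_ideal (C : (R -> Prop) -> Prop) :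
  (forall J, C J -> is_ideal J) -> (exists J, C J) -> is_chain C ->
  is_ideal (fun r => exists2 J, C J & J r).
Proof.
move=> idC [J0 CJ0] chC; split; [|split].
- by exists J0 => //; case: (idC _ CJ0).
- move=> a b [A CA Aa] [B CB Bb]; have [AB|BA] := chC _ _ CA CB.
  + by exists B => //; case: (idC _ CB) => _ [+ _]; apply; first exact: AB.
  + by exists A => //; case: (idC _ CA) => _ [+ _]; apply; last exact: BA.
- move=> r a [A CA Aa]; exists A => //.
  by case: (idC _ CA) => _ [_]; apply.
Qed.

Lemma ideal_adjoin M c : is_ideal M ->
  is_ideal (fun z => exists m r, M m /\ z = m + r * c).
Proof.
move=> [M0 [MD MM]]; split; [|split].
- by exists 0, 0; split=> //; ring.
- move=> _ _ [m1 [r1 [Mm1 ->]]] [m2 [r2 [Mm2 ->]]].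
  by exists (m1 + m2), (r1 + r2); split; [exact: MD | ring].
- move=> s _ [m [r [Mm ->]]].
  by exists (s * m), (s * r); split; [exact: MM | ring].
Qed.

Lemma maximal_avoiding_prime M x : is_ideal M -> (forall k, ~ M (x ^+ k)) ->
  (forall J, is_ideal J -> (forall k, ~ J (x ^+ k)) -> pred_sub M J -> pred_sub J M) ->
  is_prime_ideal M.
Proof.
move=> idM nM Mmax; split=> //; split; first by move=> M1; apply: (nM 0%N); rewrite expr0.
have [M0 [MD MM]] := idM.
have adjoin_power c : ~ M c -> exists k m r, M m /\ x ^+ k = m + r * c.
  move=> Mc; apply: contra_notP Mc => nopow.
  apply: (Mmax _ (ideal_adjoin c idM)); last by exists 0, 1; split=> //; ring.
  - by move=> k [m [r [Mm e]]]; apply: nopow; exists k, m, r.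
  - by move=> z Mz; exists z, 0; split=> //; ring.
move=> a b Mab; apply: contrapT => /not_orP [/adjoin_power [k [m1 [r1 [Mm1 e1]]]]].
move=> /adjoin_power [l [m2 [r2 [Mm2 e2]]]]; apply: (nM (k + l)%N).
have -> : x ^+ (k + l) = (m2 + r2 * b) * m1 + (r1 * a) * m2 + (r1 * r2) * (a * b).
  by rewrite exprD e1 e2; ring.
by apply: (MD); [apply: (MD)|]; apply: MM.
Qed.

Lemma krull_prime (I : R -> Prop) x : is_ideal I -> (forall k, ~ I (x ^+ k)) ->
  exists P, is_prime_ideal P /\ pred_sub I P /\ ~ P x.
Proof.
move=> idI nI.
pose F J := [/\ is_ideal J, pred_sub I J & forall k, ~ J (x ^+ k)].
have [M [[idM IM nM] Mmax]] : exists M, F M /\ forall J, F J -> pred_sub M J -> pred_sub J M.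
  apply: (zorn_pred (A0 := I)) => [|C FC [J0 CJ0] chC]; first by split.
  split; first by apply: chain_union_ideal => //; [move=> J /FC [] | exists J0].
  - by move=> r Ir; exists J0 => //; case: (FC _ CJ0) => _ + _; apply.
  - by move=> k [J CJ Jk]; case: (FC _ CJ) => _ _; apply; exact: Jk.
exists M; split; last by split=> // Mx; apply: (nM 1%N); rewrite expr1.
apply: maximal_avoiding_prime idM nM _ => J idJ nJ MJ.
by apply: Mmax => //; split=> // r /IM /MJ.
Qed.

Lemma proper_radical_separation J x : is_proper_radical J -> ~ J x ->
  exists P, is_prime_ideal P /\ pred_sub J P /\ ~ P x.
Proof. by move=> [idJ [_ radJ]] Jx; apply: krull_prime idJ _ => k /radJ. Qed.

Lemma prime_proper_radical P : is_prime_ideal P -> is_proper_radical P.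
Proof.
move=> [idP [P1 PM]]; split=> //; split=> // x; elim=> [|n IH]; first by rewrite expr0.
by rewrite exprS => /PM [].
Qed.

Lemma proper_radicalI (I J : R -> Prop) : is_proper_radical I -> is_proper_radical J ->
  is_proper_radical (fun r => I r /\ J r).
Proof.
move=> [[I0 [ID IM]] [I1 Irad]] [[J0 [JD JM]] [J1 Jrad]].
split; [split; [|split]|split].
- by [].
- by move=> x y [? ?] [? ?]; split; [exact: ID | exact: JD].
- by move=> r x [? ?]; split; [exact: IM | exact: JM].
- by case.
- by move=> x n [? ?]; split; [exact: (Irad x n) | exact: (Jrad x n)].
Qed.

Lemma Spec_inhabited : inhabited (Spec R).
Proof.
have idR0 : is_ideal (fun r : R => r = 0).
  by split=> //; split=> [x y -> ->|r x ->]; rewrite ?addr0 ?mulr0.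
have [|P [pP _]] := @krull_prime _ 1 idR0.
  by move=> k; rewrite expr1n; apply/eqP; exact: oner_neq0.
by constructor; exists P.
Qed.

Lemma meet_not_sub_prime (I : finType) (f : I -> R -> Prop) (S : {set I}) P :
  (forall j, is_ideal (f j)) -> is_prime_ideal P -> (forall j, j \in S -> ~ pred_sub (f j) P) ->
  exists y, (forall j, j \in S -> f j y) /\ ~ P y.
Proof.
move=> idf [_ [P1 PM]] fP.
have /choice [a ha] : forall j, exists r : R, j \in S -> f j r /\ ~ P r.
  move=> j; have [jS|jS] := boolP (j \in S); last by exists 0.
  by have /existsNP [r /not_implyP] := fP j jS; exists r.
exists (\prod_(j in S) a j); split.
- move=> j jS; rewrite (bigD1 j) //= mulrC.
  by case: (idf j) => _ [_]; apply; case: (ha j jS).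
- apply: (big_ind (fun z => ~ P z)) => // [y z Py Pz /PM []//|j /ha []//].
Qed.

Lemma meet_primes_chain (I : finType) (f : I -> R -> Prop) :
  (forall i, is_prime_ideal (f i)) -> injective f ->
  forall k (S : {set I}), #|S| = k.+1 ->
  exists H : nat -> R -> Prop,
    [/\ forall i, (i <= k)%N -> is_proper_radical (H i),
        forall i, (i < k)%N -> pred_ssub (H i.+1) (H i)
      & forall r, H k r <-> forall j, j \in S -> f j r].
Proof.
move=> pf injf; elim=> [|k IH] S cardS.
  have /cards1P [j ->] : #|S| == 1%N by rewrite cardS.
  exists (fun _ => f j); split=> // [i _|r]; first exact: prime_proper_radical.
  split=> [fr l|fr]; first by rewrite inE => /eqP ->.
  by apply: fr; rewrite inE.
have [i0 i0S] : exists i0, i0 \in S by apply/card_gt0P; rewrite cardS.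
have [M MS Mmin] := exists_minimal f i0S.
have cardSM : #|S :\ M| = k.+1 by move: cardS; rewrite (cardsD1 M) MS => -[].
have [H [Hrad Hss Hk]] := IH _ cardSM.
exists (fun i => if (i <= k)%N then H i else fun r => H k r /\ f M r); split.
- move=> i ik; case: ifP => [/Hrad //|_].
  by apply: proper_radicalI; [exact: Hrad | exact: prime_proper_radical].
- move=> i; rewrite ltnS => ik; rewrite ik; case: (leqP i.+1 k) => [i1k|ki].
    exact: Hss.
  have -> : i = k by apply/eqP; rewrite eqn_leq ik -ltnS.
  split=> [r [] //|]; apply/existsNP.
  have notsub j : j \in S :\ M -> ~ pred_sub (f j) (f M).
    move=> /setD1P [jM jS] sub_jM.
    by move: jM; rewrite (injf _ _ (pred_ext sub_jM (Mmin j jS sub_jM))) eqxx.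
  have [y [Hy My]] := meet_not_sub_prime (fun j => (pf j).1) (pf M) notsub.
  by exists y => /(_ ((Hk y).2 Hy)) [].
- move=> r; rewrite ltnn; split=> [[/Hk Hr fMr] j jS|fr].
  + by have [->|jM] := eqVneq j M; last by apply: Hr; rewrite !inE jM.
  + by split; [apply/Hk => j /setD1P [_] | ]; apply: fr.
Qed.

Lemma Spec_inj (P Q : Spec R) : sval P = sval Q -> P = Q.
Proof. by apply: eq_sig_hprop => ? ? ?; exact: Prop_irrelevance. Qed.

Lemma proper_radical_chain_of_primes n (f : 'I_n.+1 -> Spec R) :
  injective f -> descending_chain is_proper_radical n.
Proof.
move=> injf.
have injf' : injective (fun i => sval (f i)) by move=> i j /Spec_inj /injf.
have := meet_primes_chain (fun i => svalP (f i)) injf' (S := [set: 'I_n.+1]).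
by rewrite cardsT card_ord => /(_ n erefl) [H [Hrad Hss _]]; exists H.
Qed.

Lemma primes_of_proper_radical_chain t :
  descending_chain is_proper_radical t -> exists f : 'I_t.+1 -> Spec R, injective f.
Proof.
move=> [H [Hrad Hss]].
have Hanti i j : (i <= j <= t)%N -> pred_sub (H j) (H i).
  move=> /andP [ij jt]; elim: j ij jt => [|j IH]; first by rewrite leqn0 => /eqP -> _ r.
  rewrite leq_eqVlt ltnS => /predU1P [-> _ r //|ij] jt r /(Hss j jt).1.
  exact: (IH ij (ltnW jt) r).
(* x_0 = 1 and x_i is in H_(i-1) but not in P_i, a prime above H_i; for i < j,
   x_j lies in H_i, hence in P_i but not in P_j. *)
have /choice [xP sep] : forall i : 'I_t.+1, exists xP : R * Spec R,
    [/\ forall j, (j < i)%N -> H j xP.1, pred_sub (H i) (sval xP.2) & ~ sval xP.2 xP.1].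
  case=> [[|i] /= it].
    have [P [pP [HP Px]]] := proper_radical_separation (x := 1) (Hrad 0%N isT) (Hrad 0%N isT).2.1.
    by exists (1, exist _ P pP).
  have [Hi Hi1] := Hss i it.
  have /existsNP [x /not_implyP [Hix Hi1x]] := Hi1.
  have [P [pP [HP Px]]] := proper_radical_separation (Hrad i.+1 it) Hi1x.
  exists (x, exist _ P pP); split=> // j; rewrite ltnS => ji.
  by apply: Hanti Hix; rewrite ji ltnW.
have sep_lt (i j : 'I_t.+1) : (i < j)%N -> (xP i).2 <> (xP j).2.
  move=> ij Pij; have [xj _ Pj] := sep j; have [_ Hi _] := sep i.
  by apply: Pj; rewrite -Pij; apply: Hi; apply: xj.
exists (fun i => (xP i).2) => i j Pij.
case: (ltngtP i j) => [/sep_lt ij|/sep_lt ji|/val_inj //].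
- by case: (ij Pij).
- by case: (ji (esym Pij)).
Qed.

Lemma proper_radical_prime :
  (forall P Q : Spec R, pred_sub (sval P) (sval Q) \/ pred_sub (sval Q) (sval P)) ->
  forall J, is_proper_radical J -> is_prime_ideal J.
Proof.
move=> lin J radJ; have [idJ [J1 _]] := radJ; split=> //; split=> // a b Jab.
apply: contrapT => /not_orP [Ja Jb].
have [P1 [pP1 [JP1 P1a]]] := proper_radical_separation radJ Ja.
have [P2 [pP2 [JP2 P2b]]] := proper_radical_separation radJ Jb.
have [P1ab P2ab] := (JP1 _ Jab, JP2 _ Jab).
case: (lin (exist _ P1 pP1) (exist _ P2 pP2)) => /= sub.
- by case: pP1 => _ [_ /(_ a b P1ab) [//|/sub]].
- by case: pP2 => _ [_ /(_ a b P2ab) [/sub|//]].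
Qed.

Lemma kernel_proper_radical T (c : T -> R -> Prop) (Z : T -> Prop) t0 : Z t0 ->
  (forall t, Z t -> is_proper_radical (c t)) -> is_proper_radical (kernel c Z).
Proof.
move=> Zt0 radc; split; [split; [|split]|split].
- by move=> t /radc [[]].
- by move=> x y Kx Ky t Zt; have [[_ [+ _]] _] := radc t Zt; apply; [exact: Kx|exact: Ky].
- by move=> r x Kx t Zt; have [[_ [_ +]] _] := radc t Zt; apply; exact: Kx.
- by move=> K1; have [_ [+ _]] := radc t0 Zt0; apply; exact: K1.
- by move=> x n Kx t Zt; have [_ [_ +]] := radc t Zt; apply; exact: Kx.
Qed.

End PrimeIdeals.

Section HullKernelTopology.
Variable R : comNzRingType.
Local Open Scope ring_scope.

Lemma gen_closed_up (B : Rd R -> Prop) : gen_closed (@hk_subbasis R) B ->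
  forall H H' : Rd R, B H -> pred_sub (sval H) (sval H') -> B H'.
Proof.
elim=> [A [s As]||A B' _ IHA _ IHB|F _ IH] H H' BH HH'.
- by apply/As => y /((As H).1 BH) /HH'.
- by [].
- by case: BH => [/IHA|/IHB] => /(_ H' HH'); [left|right].
- by move=> A FA; exact: IH A FA H H' (BH A FA) HH'.
Qed.

Lemma hk_closed_up (Z : Rd R -> Prop) H H' :
  hk_closed Z -> Z H -> pred_sub (sval H) (sval H') -> Z H'.
Proof. by case=> B [gB ZB] /ZB BH HH'; apply/ZB; exact: gen_closed_up gB H H' BH HH'. Qed.

Lemma hk_closed_hull (K : R -> Prop) : hk_closed (hull sval K).
Proof.
pose F (A : Rd R -> Prop) := exists2 x, K x & forall H : Rd R, A H <-> sval H x.
exists (fun H => forall A, F A -> A H); split.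
  apply: gc_inter => A [x Kx AH]; apply: gc_sub; exists [:: x] => H.
  rewrite AH; split=> [Hx y|Hs]; first by rewrite mem_seq1 => /eqP ->.
  by apply: Hs; rewrite mem_seq1.
move=> H; split=> [KH A [x Kx /(_ H) ->]|FH x Kx]; first exact: KH.
by apply: (FH (fun G : Rd R => sval G x)); exists x.
Qed.

Lemma hk_irreducible_hull (Z : Rd R -> Prop) : irreducible_closed (@hk_closed R) Z ->
  exists K, is_proper_radical K /\ forall H, Z H <-> hull sval K H.
Proof.
case=> cZ [[H0 ZH0] Zirr].
have radK := kernel_proper_radical ZH0 (fun H _ => svalP H).
pose HK : Rd R := exist _ _ radK.
(* irreducibility makes the kernel a point of every closed set containing Z *)
have gen_kernel B : gen_closed (@hk_subbasis R) B -> pred_sub Z B -> B HK.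
  elim: B / => [A [s As]||A B gA IHA gB IHB|F _ IH] ZB.
  - by apply/As => y ys H ZH; exact: (As H).1 (ZB _ ZH) y ys.
  - by case: (ZB _ ZH0).
  - have [cA cB] : hk_closed A /\ hk_closed B by split; [exists A | exists B].
    by case: (Zirr A B cA cB ZB) => [/IHA|/IHB]; [left|right].
  - by move=> A FA; apply: IH => // H /ZB; apply.
exists (kernel sval Z); split=> // H; split=> [ZH r Kr|KH]; first exact: Kr H ZH.
case: cZ => B [gB ZB]; apply/ZB.
by apply: gen_closed_up gB HK H (gen_kernel B gB (fun H => (ZB H).1)) KH.
Qed.

Lemma hk_has_chainE t : has_chain (@hk_closed R) t <-> descending_chain (@is_proper_radical R) t.
Proof.
apply: (has_chain_hullE (carrier := sval)).
- by move=> K radK; exists (exist _ K radK).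
- by move=> Z H H' cZ; exact: hk_closed_up.
- by move=> K _; exact: hk_closed_hull.
- exact: hk_irreducible_hull.
Qed.

Lemma zariski_closed_up (Z : Spec R -> Prop) P Q :
  zariski_closed Z -> Z P -> pred_sub (sval P) (sval Q) -> Z Q.
Proof. by case=> E ZE /ZE EP PQ; apply/ZE => x /EP /PQ. Qed.

Lemma zariski_irreducible_hull (Z : Spec R -> Prop) : irreducible_closed (@zariski_closed R) Z ->
  exists K, is_prime_ideal K /\ forall P, Z P <-> hull sval K P.
Proof.
case=> [[E ZE] [[P0 ZP0] Zirr]].
have [idK [K1 _]] := kernel_proper_radical ZP0 (fun P _ => prime_proper_radical (svalP P)).
have closedV c : @zariski_closed R (fun P => sval P c).
  by exists (eq c) => P; split=> [Pc _ <-|]; last apply.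
exists (kernel sval Z); split; last first.
  move=> P; split=> [ZP r Kr|KP]; first exact: Kr P ZP.
  by apply/ZE => x Ex; apply: KP => Q /ZE; apply.
split=> //; split=> // a b Kab.
have ZV : pred_sub Z (fun P => sval P a \/ sval P b).
  by move=> P ZP; have [_ [_]] := svalP P; apply; exact: Kab.
by case: (Zirr _ _ (closedV a) (closedV b) ZV) => sub; [left|right] => P /sub.
Qed.

Lemma zariski_has_chainE t : has_chain (@zariski_closed R) t <-> descending_chain (@is_prime_ideal R) t.
Proof.
apply: (has_chain_hullE (carrier := sval)).
- by move=> K pK; exists (exist _ K pK).
- by move=> Z P Q cZ; exact: zariski_closed_up.
- by move=> K _; exists K.
- exact: zariski_irreducible_hull.
Qed.

End HullKernelTopology.

Lemma hk_has_chain_primes (R : comNzRingType) t :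
  has_chain (@hk_closed R) t <-> exists f : 'I_t.+1 -> Spec R, injective f.
Proof.
rewrite hk_has_chainE; split; first exact: primes_of_proper_radical_chain.
by case=> f /proper_radical_chain_of_primes.
Qed.

Theorem proposition4p2 (R : comNzRingType) :
  ((forall n : nat, ~ has_card (Spec R) n) -> top_dim (@hk_closed R) = EInf) /\
  (forall n : nat, has_card (Spec R) n -> top_dim (@hk_closed R) = EFin n.-1) /\
  enat_le (top_dim (@zariski_closed R)) (top_dim (@hk_closed R)) /\
  ((forall P Q : Spec R, pred_sub (proj1_sig P) (proj1_sig Q) \/ pred_sub (proj1_sig Q) (proj1_sig P)) ->
     top_dim (@hk_closed R) = top_dim (@zariski_closed R)).
Proof.
have [P0] := Spec_inhabited R.
split; [|split; [|split]].
- move=> inf; apply: top_dim_unbounded => n; apply/hk_has_chain_primes.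
  exact: injections_of_infinite P0 inf n.+1.
- move=> n [f [g fg gf]]; have n_gt0 : (0 < n)%N := leq_ltn_trans (leq0n _) (ltn_ord (g P0)).
  apply: top_dim_fin; split=> [t /hk_has_chain_primes [h injh]|m]; last first.
    by apply; apply/hk_has_chain_primes; rewrite prednK //; exists f; exact: can_inj fg.
  have := leq_card _ (inj_comp (can_inj gf) injh); rewrite !card_ord.
  by move=> tn; rewrite -ltnS prednK.
- apply: top_dim_le => t; rewrite zariski_has_chainE hk_has_chainE.
  exact/descending_chain_mono/prime_proper_radical.
- move=> lin; apply: top_dim_eq => t; rewrite hk_has_chainE zariski_has_chainE.
  split; apply: descending_chain_mono; [exact: proper_radical_prime | exact: prime_proper_radical].
Qed.
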